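(* Let $l_{\max}\ge 1$ be an integer, let $C_1,\dots,C_{l_{\max}}\in\mathbb{R}$, and let $N_0\in\mathbb{N}$. For each integer $N\ge N_0$ let $E^N_1,\dots,E^N_N$ be a symmetric sequence of events (on some probability space depending on $N$) whose correlation coefficients $C^{(N)}_k$, $1\le k\le N$, satisfy $C^{(N)}_k=C_k$ for $1\le k\le l_{\max}$ and $C^{(N)}_k=0$ for $l_{\max}<k\le N$ (i.e. for every $N\ge N_0$ the sequence is correlated up to order $l_{\max}$ with the same correlation coefficients $C_1,\dots,C_{l_{\max}}$). Let $p_N$ denote the count probability of $E^N_1,\dots,E^N_N$. Then for every $s\in\mathbb{N}_0$ the limit $p_\infty(s):=\lim_{N\to\infty}p_N(s)$ exists, and the characteristic function of $p_\infty$ is $$\chi(u)=\sum_{s=0}^\infty e^{ius}p_\infty(s)=\exp\Big[\sum_{l=1}^{l_{\max}}\sum_{t=0}^{l}(-1)^{l-t}\frac{C_l}{l!}\binom{l}{t}e^{itu}\Big],\qquad u\in\mathbb{R}.$$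
   Context: For an event $E$ on a probability space $(\Omega,\Sigma,P)$, $\mathbbm{1}_E$ denotes its indicator function. A finite sequence of events $E_1,\dots,E_N$ on a common probability space is called symmetric if for all $r_1,\dots,r_N\in\{0,1\}$ and all permutations $\sigma$ of $\{1,\dots,N\}$, $P(\mathbbm{1}_{E_1}=r_1,\dots,\mathbbm{1}_{E_N}=r_N)=P(\mathbbm{1}_{E_1}=r_{\sigma(1)},\dots,\mathbbm{1}_{E_N}=r_{\sigma(N)})$. For $1\le k\le N$ the probability function of order $k$ is $P_k(r_1,\dots,r_k):=\sum_{r_{k+1},\dots,r_N\in\{0,1\}}P(\mathbbm{1}_{E_1}=r_1,\dots,\mathbbm{1}_{E_N}=r_N)$. The correlation functions $G_k:\{0,1\}^k\to\mathbb{R}$ are defined by $G_1:=P_1$ and, recursively for $1<k\le N$, $$G_k(r_1,\dots,r_k):=P_k(r_1,\dots,r_k)-\sum_{\sigma}\sum_{l=1}^{k-1}\frac{1}{(l-1)!\,(k-l)!}G_l(r_1,r_{\sigma(2)},\dots,r_{\sigma(l)})\,P_{k-l}(r_{\sigma(l+1)},\dots,r_{\sigma(k)}),$$ where $\sigma$ runs over all permutations of $\{2,\dots,k\}$. The correlation coefficient of order $k$ is $C_k:=N^kG_k(1,\dots,1)$. The count probability is $p_N(s):=\mathbb{E}\big[\delta(s-\sum_{l=1}^N\mathbbm{1}_{E_l})\big]$ for $s\in\mathbb{N}_0$, where $\delta(0)=1$ and $\delta(k)=0$ for $k\neq0$; i.e. $p_N(s)$ is the probability that exactly $s$ of the events occur.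 *)

From Stdlib Require Import Reals List Permutation Arith.
Import ListNotations.
Open Scope R_scope.

Definition sumR (l : list R) : R := fold_right Rplus 0 l.

Fixpoint bools (n : nat) : list (list bool) :=
  match n with
  | O => [[]]
  | S m => flat_map (fun r => [true :: r; false :: r]) (bools m)
  end.

(* All rearrangements of a list by permutations of positions
   (exactly (length l)! lists, one per permutation sigma). *)
Fixpoint insert_all {A : Type} (x : A) (l : list A) : list (list A) :=
  match l with
  | [] => [[x]]
  | y :: l' => (x :: y :: l') :: map (cons y) (insert_all x l')
  end.

Fixpoint perms {A : Type} (l : list A) : list (list A) :=
  match l with
  | [] => [[]]
  | x :: l' => flat_map (insert_all x) (perms l')
  end.

(* A sequence of N events E_1..E_N is described by the joint law of its
   indicators: P r = P(1_{E_1} = r_1, ..., 1_{E_N} = r_N) for r of length N. *)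
Definition is_joint_law (N : nat) (P : list bool -> R) : Prop :=
  (forall r, length r = N -> 0 <= P r) /\ sumR (map P (bools N)) = 1.

Definition symmetric (N : nat) (P : list bool -> R) : Prop :=
  forall r r', length r = N -> Permutation r r' -> P r = P r'.

Definition Pk (N : nat) (P : list bool -> R) (k : nat) (r : list bool) : R :=
  sumR (map (fun rest => P (r ++ rest)) (bools (N - k))).

(* Gs N P m l r = G_l(r) for 1 <= l <= m (strong recursion on the order).
   For order k = S m', with r = r_1 :: tl, sigma ranging over permutations of
   (r_2..r_k) (= tl):
   G_k(r) = P_k(r) - sum_sigma sum_{j=1}^{k-1} 1/((j-1)!(k-j)!)
              G_j(r_1, sigma_2..sigma_j) P_{k-j}(sigma_{j+1}..sigma_k). *)
Fixpoint Gs (N : nat) (P : list bool -> R) (m l : nat) (r : list bool) : R :=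
  match m with
  | O => 0
  | S m' =>
      if Nat.leb l m' then Gs N P m' l r
      else
        Pk N P m r -
        sumR (map (fun sg =>
          sumR (map (fun j =>
            / (INR (fact (j - 1)) * INR (fact (m - j))) *
            Gs N P m' j (hd false r :: firstn (j - 1) sg) *
            Pk N P (m - j) (skipn (j - 1) sg))
          (seq 1 m')))
        (perms (tl r)))
  end.

Definition G (N : nat) (P : list bool -> R) (k : nat) (r : list bool) : R :=
  Gs N P k k r.

Definition corr_coef (N : nat) (P : list bool -> R) (k : nat) : R :=
  (INR N) ^ k * G N P k (repeat true k).

Definition count_true (r : list bool) : nat :=
  length (filter (fun b : bool => b) r).

Definition count_prob (N : nat) (P : list bool -> R) (s : nat) : R :=
  sumR (map (fun r => P r * (if Nat.eqb s (count_true r) then 1 else 0))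
            (bools N)).

(* Exponent of the characteristic function:
   sum_{l=1}^{lmax} sum_{t=0}^{l} (-1)^(l-t) C_l / l! binom(l,t) e^{itu},
   split into real part (cos) and imaginary part (sin). *)
Definition expo_re (lmax : nat) (C : nat -> R) (u : R) : R :=
  sumR (map (fun l => sumR (map (fun t =>
     (-1) ^ (l - t) * (C l / INR (fact l)) * Binomial.C l t * cos (INR t * u))
     (seq 0 (S l)))) (seq 1 lmax)).

Definition expo_im (lmax : nat) (C : nat -> R) (u : R) : R :=
  sumR (map (fun l => sumR (map (fun t =>
     (-1) ^ (l - t) * (C l / INR (fact l)) * Binomial.C l t * sin (INR t * u))
     (seq 0 (S l)))) (seq 1 lmax)).

From Coquelicot Require Import Coquelicot.
From Stdlib Require Import Reals List Permutation Arith Lia Lra.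
Import ListNotations.
Open Scope R_scope.

(* For a symmetric law, inclusion-exclusion gives
     p_N(s) = sum_k (-1)^(k+s) binom(k,s) binom(N,k) P_k(1,...,1).
   On the diagonal (1,...,1) all permutations in the recursion defining G_k give the
   same term, and the recursion becomes the coefficient recursion of an exponential:
   N^k P_k(1,...,1) = k! b_k with sum_k b_k x^k = exp (sum_l C_l x^l / l!), whatever N.
   Hence p_N(s) = sum_k (-1)^(k+s) binom(k,s) (N)_k/N^k b_k, where (N)_k/N^k lies in
   [0,1] and tends to 1.  Since the exponent is a polynomial, b_k decays geometrically
   (the 1/k in its recursion eventually wins), so Tannery's theorem gives
   p_oo(s) = sum_k (-1)^(k+s) binom(k,s) b_k.
   Summing against e^(ius) and exchanging the sums once more,
   chi(u) = sum_k b_k (e^(iu) - 1)^k = exp (sum_l C_l (e^(iu) - 1)^l / l!),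
   which is the claimed exponent by the binomial theorem.  The last identity is
   obtained from the ODE g' = F' g satisfied by g(t) = sum_k b_k z^k t^k, showing
   that e^(-F(t)) g(t) is constant. *)

Definition Rsum (n : nat) (f : nat -> R) : R := sumR (map f (seq 0 n)).

Lemma sumR_app l1 l2 : sumR (l1 ++ l2) = sumR l1 + sumR l2.
Proof. induction l1; simpl; [lra | rewrite IHl1; lra]. Qed.

Lemma sumR_map_ext {A} (l : list A) f g :
  (forall x, In x l -> f x = g x) -> sumR (map f l) = sumR (map g l).
Proof. induction l; simpl; intros H; [lra |]. rewrite H, IHl; auto. Qed.

Lemma sumR_map_add {A} (l : list A) f g :
  sumR (map (fun x => f x + g x) l) = sumR (map f l) + sumR (map g l).
Proof. induction l; simpl; [lra |]. rewrite IHl; lra. Qed.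

Lemma sumR_map_scal {A} (l : list A) c f :
  sumR (map (fun x => c * f x) l) = c * sumR (map f l).
Proof. induction l; simpl; [lra |]. rewrite IHl; lra. Qed.

Lemma sumR_map_repeat {A} (a : A) n f : sumR (map f (repeat a n)) = INR n * f a.
Proof. induction n; simpl; [lra |]. rewrite IHn. destruct n; simpl; lra. Qed.

Lemma sumR_flat_map {A B} (g : A -> list B) f l :
  sumR (map f (flat_map g l)) = sumR (map (fun x => sumR (map f (g x))) l).
Proof. induction l; simpl; [reflexivity |]. rewrite map_app, sumR_app, IHl. reflexivity. Qed.

Lemma Rsum_0 f : Rsum 0 f = 0.
Proof. reflexivity. Qed.

Lemma Rsum_S n f : Rsum (S n) f = Rsum n f + f n.
Proof. unfold Rsum. rewrite seq_S, map_app, sumR_app. simpl. lra. Qed.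

Lemma Rsum_ext n f g : (forall k, (k < n)%nat -> f k = g k) -> Rsum n f = Rsum n g.
Proof. induction n; intros H; [reflexivity |]. rewrite !Rsum_S, IHn, H; auto. Qed.

Lemma Rsum_Sl n f : Rsum (S n) f = f 0%nat + Rsum n (fun k => f (S k)).
Proof. induction n; [unfold Rsum; simpl; lra |]. rewrite Rsum_S, IHn, Rsum_S. lra. Qed.

Lemma sumR_seq1 n f : sumR (map f (seq 1 n)) = Rsum n (fun j => f (S j)).
Proof. unfold Rsum. rewrite <- seq_shift, map_map. reflexivity. Qed.

Lemma Rsum_add n f g : Rsum n (fun k => f k + g k) = Rsum n f + Rsum n g.
Proof. induction n; [unfold Rsum; simpl; lra |]. rewrite !Rsum_S, IHn; lra. Qed.

Lemma Rsum_scal n c f : Rsum n (fun k => c * f k) = c * Rsum n f.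
Proof. induction n; [unfold Rsum; simpl; lra |]. rewrite !Rsum_S, IHn; lra. Qed.

Lemma Rsum_zero n : Rsum n (fun _ => 0) = 0.
Proof. induction n; [reflexivity |]. rewrite Rsum_S, IHn; lra. Qed.

Lemma Rsum_swap n m f :
  Rsum n (fun i => Rsum m (fun j => f i j)) = Rsum m (fun j => Rsum n (fun i => f i j)).
Proof.
  induction n.
  - rewrite Rsum_0. symmetry. apply Rsum_zero.
  - rewrite Rsum_S, IHn, <- Rsum_add. apply Rsum_ext. intros. rewrite Rsum_S. reflexivity.
Qed.

Lemma sumR_map_Rsum {A} (l : list A) n (g : A -> nat -> R) :
  sumR (map (fun r => Rsum n (g r)) l) = Rsum n (fun k => sumR (map (fun r => g r k) l)).
Proof.
  induction l; simpl.
  - symmetry; apply Rsum_zero.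
  - rewrite IHl, <- Rsum_add. reflexivity.
Qed.

Lemma Rsum_trunc n m f :
  (n <= m)%nat -> (forall k, (n <= k < m)%nat -> f k = 0) -> Rsum m f = Rsum n f.
Proof.
  intros Hnm H. induction m.
  - replace n with 0%nat by lia. reflexivity.
  - destruct (Nat.eq_dec n (S m)); [subst; reflexivity |].
    rewrite Rsum_S, IHm, H; try lra; try lia. intros; apply H; lia.
Qed.

Lemma Rsum_le n f g : (forall k, (k < n)%nat -> f k <= g k) -> Rsum n f <= Rsum n g.
Proof.
  induction n; intros H; [unfold Rsum; simpl; lra |]. rewrite !Rsum_S.
  assert (Rsum n f <= Rsum n g) by (apply IHn; auto).
  assert (f n <= g n) by (apply H; lia). lra.
Qed.

Lemma Rsum_abs n f : Rabs (Rsum n f) <= Rsum n (fun k => Rabs (f k)).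
Proof.
  induction n; [unfold Rsum; simpl; rewrite Rabs_R0; lra |]. rewrite !Rsum_S.
  eapply Rle_trans; [apply Rabs_triang | lra].
Qed.

Lemma Rsum_le_Rsum n m f : (forall k, 0 <= f k) -> (n <= m)%nat -> Rsum n f <= Rsum m f.
Proof. intros Hf H. induction H; [lra |]. rewrite Rsum_S. specialize (Hf m). lra. Qed.

Lemma Rsum_ge0 n f : (forall k, 0 <= f k) -> 0 <= Rsum n f.
Proof. intros. rewrite <- (Rsum_0 f). apply Rsum_le_Rsum; auto; lia. Qed.

Lemma Rsum_sub_abs n K f M : (K <= n)%nat -> (forall k, Rabs (f k) <= M k) ->
  Rabs (Rsum n f - Rsum K f) <= Rsum n M - Rsum K M.
Proof.
  intros Hn H. induction n.
  - replace K with 0%nat by lia. rewrite !Rminus_diag, Rabs_R0. lra.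
  - destruct (Nat.eq_dec K (S n)); [subst; rewrite !Rminus_diag, Rabs_R0; lra |].
    rewrite !Rsum_S. specialize (IHn ltac:(lia)). specialize (H n).
    replace (Rsum n f + f n - Rsum K f) with ((Rsum n f - Rsum K f) + f n) by ring.
    eapply Rle_trans; [apply Rabs_triang | lra].
Qed.

Lemma sum_f_R0_Rsum f n : sum_f_R0 f n = Rsum (S n) f.
Proof. induction n; [unfold Rsum; simpl; lra |]. simpl sum_f_R0. rewrite IHn, (Rsum_S (S n)). reflexivity. Qed.

(* Pascal's rule, so that [binom n k = 0] for [k > n] (unlike [Binomial.C]). *)
Fixpoint binom (n k : nat) : R :=
  match n, k with
  | _, O => 1
  | O, S _ => 0
  | S n', S k' => binom n' k' + binom n' (S k')
  end.

Lemma binom_n0 n : binom n 0 = 1.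
Proof. destruct n; reflexivity. Qed.

Lemma binom_SS n k : binom (S n) (S k) = binom n k + binom n (S k).
Proof. reflexivity. Qed.

Lemma binom_gt n k : (n < k)%nat -> binom n k = 0.
Proof.
  revert k; induction n; intros k H; destruct k; try lia; simpl; auto.
  rewrite !IHn; lia || lra.
Qed.

Lemma binom_ge0 n k : 0 <= binom n k.
Proof.
  revert k; induction n; intros k; destruct k; simpl; try lra.
  pose proof (IHn k); pose proof (IHn (S k)). lra.
Qed.

Lemma binom_le_pow2 n k : binom n k <= 2 ^ n.
Proof.
  revert k; induction n; intros k; destruct k; simpl; try lra.
  - pose proof (pow_le 2 n). specialize (IHn 0%nat). rewrite binom_n0 in *. lra.
  - specialize (IHn k) as H1; specialize (IHn (S k)). lra.
Qed.

Lemma binom_nn n : binom n n = 1.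
Proof. induction n; [reflexivity |]. rewrite binom_SS, IHn, binom_gt; lia || lra. Qed.

Lemma INR_fact_pos n : 0 < INR (fact n).
Proof. apply lt_0_INR, lt_O_fact. Qed.

Lemma binom_C n k : (k <= n)%nat -> binom n k = Binomial.C n k.
Proof.
  revert k. induction n; intros k Hk.
  - replace k with 0%nat by lia. unfold Binomial.C. simpl. lra.
  - destruct k.
    + rewrite binom_n0. unfold Binomial.C. rewrite Nat.sub_0_r. simpl (fact 0).
      pose proof (INR_fact_pos (S n)). simpl (INR 1). field. lra.
    + rewrite binom_SS. destruct (Nat.eq_dec k n).
      * subst. rewrite binom_nn, (binom_gt n (S n)) by lia. unfold Binomial.C.
        rewrite Nat.sub_diag. simpl (fact 0). pose proof (INR_fact_pos (S n)). simpl (INR 1).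
        field. lra.
      * rewrite !IHn by lia. apply pascal. lia.
Qed.

Fixpoint falling (n k : nat) : R :=
  match k with O => 1 | S k' => falling n k' * (INR n - INR k') end.

Lemma falling_SS n k : falling (S n) (S k) = INR (S n) * falling n k.
Proof.
  induction k; [simpl; ring |].
  change (falling (S n) (S (S k))) with (falling (S n) (S k) * (INR (S n) - INR (S k))).
  change (falling n (S k)) with (falling n k * (INR n - INR k)).
  rewrite IHk, !(S_INR n), (S_INR k). ring.
Qed.

Lemma falling_0S k : falling 0 (S k) = 0.
Proof. induction k; simpl in *; [lra |]. rewrite IHk; lra. Qed.

Lemma binom_fact n k : binom n k * INR (fact k) = falling n k.
Proof.
  revert k. induction n; intros k.
  - destruct k; [simpl; lra |]. rewrite falling_0S. simpl binom. lra.
  - destruct k; [simpl; lra |]. rewrite falling_SS, binom_SS.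
    replace (INR (fact (S k))) with (INR (S k) * INR (fact k)) by (rewrite <- mult_INR; reflexivity).
    transitivity (INR (S k) * (binom n k * INR (fact k)) + binom n (S k) * INR (fact (S k))).
    { replace (INR (fact (S k))) with (INR (S k) * INR (fact k)) by (rewrite <- mult_INR; reflexivity). ring. }
    rewrite !IHn. simpl falling. rewrite !S_INR. ring.
Qed.

(** * Inclusion-exclusion for symmetric laws *)

Lemma sumR_bools_S m f : sumR (map f (bools (S m))) =
  sumR (map (fun r => f (true :: r) + f (false :: r)) (bools m)).
Proof. simpl. rewrite sumR_flat_map. apply sumR_map_ext. intros. simpl. lra. Qed.

Lemma bools_length n r : In r (bools n) -> length r = n.
Proof.
  revert r; induction n; simpl; intros r H.
  - destruct H as [<- | []]; reflexivity.
  - apply in_flat_map in H. destruct H as [x [Hx H]]. simpl in H.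
    destruct H as [<- | [<- | []]]; simpl; f_equal; auto.
Qed.

Lemma count_true_le r : (count_true r <= length r)%nat.
Proof. unfold count_true. apply filter_length_le. Qed.

Lemma count_true_cons b r : count_true (b :: r) = ((if b then 1 else 0) + count_true r)%nat.
Proof. unfold count_true. destruct b; reflexivity. Qed.

Lemma symmetric_cons n P b : symmetric (S n) P -> symmetric n (fun r => P (b :: r)).
Proof. intros H r r' Hl Hp. apply H; [simpl; auto | apply perm_skip; auto]. Qed.

Definition binom_moment n (P : list bool -> R) k :=
  sumR (map (fun r => P r * binom (count_true r) k) (bools n)).

Lemma binom_moment_gt n k P : (n < k)%nat -> binom_moment n P k = 0.
Proof.
  intros H. unfold binom_moment. rewrite (sumR_map_ext _ _ (fun _ => 0)).
  - clear. induction (bools n); simpl; lra.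
  - intros r Hr. apply bools_length in Hr. pose proof (count_true_le r).
    rewrite binom_gt by lia. lra.
Qed.

Lemma Pk_S_cons n P k :
  Pk n (fun r => P (true :: r)) k (repeat true k) = Pk (S n) P (S k) (repeat true (S k)).
Proof. reflexivity. Qed.

Lemma Pk_split_first n P k : symmetric (S n) P -> (k < n)%nat ->
  Pk n (fun r => P (true :: r)) (S k) (repeat true (S k)) +
  Pk n (fun r => P (false :: r)) (S k) (repeat true (S k)) =
  Pk (S n) P (S k) (repeat true (S k)).
Proof.
  intros HP Hk. unfold Pk. rewrite <- sumR_map_add.
  replace (S n - S k)%nat with (S (n - S k)) by lia. rewrite sumR_bools_S.
  apply sumR_map_ext. intros rest Hr. apply bools_length in Hr.
  f_equal; apply HP; try (simpl; rewrite length_app, repeat_length; lia);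
    apply (Permutation_middle (repeat true (S k)) rest).
Qed.

Lemma binom_moment_symmetric n : forall k P, symmetric n P -> (k <= n)%nat ->
  binom_moment n P k = binom n k * Pk n P k (repeat true k).
Proof.
  induction n; intros k P HP Hk.
  - replace k with 0%nat by lia. unfold binom_moment, Pk. simpl. lra.
  - unfold binom_moment at 1. rewrite sumR_bools_S.
    destruct k as [| k].
    + unfold Pk. simpl (S n - 0)%nat. rewrite sumR_bools_S, binom_n0, Rmult_1_l.
      apply sumR_map_ext. intros. rewrite !binom_n0. simpl. lra.
    + pose proof (symmetric_cons n P true HP) as HT.
      pose proof (symmetric_cons n P false HP) as HF.
      transitivity (binom_moment n (fun r => P (true :: r)) k +
        (binom_moment n (fun r => P (true :: r)) (S k) +
         binom_moment n (fun r => P (false :: r)) (S k))).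
      { unfold binom_moment. rewrite <- !sumR_map_add. apply sumR_map_ext. intros r _.
        rewrite !count_true_cons. simpl (1 + count_true r)%nat. rewrite binom_SS.
        simpl (0 + _)%nat. lra. }
      rewrite IHn, Pk_S_cons by (auto; lia). rewrite binom_SS.
      destruct (Nat.eq_dec k n) as [-> | Hne].
      * rewrite !binom_moment_gt, (binom_gt n (S n)) by lia. lra.
      * rewrite !IHn by (auto; lia). rewrite <- (Pk_split_first n P k) by (auto; lia). lra.
Qed.

Lemma binom_inversion c : forall s,
  Rsum (S c) (fun k => (-1) ^ (k + s) * binom k s * binom c k) = if Nat.eqb s c then 1 else 0.
Proof.
  set (e := fun c s => Rsum (S c) (fun k => (-1) ^ (k + s) * binom k s * binom c k)).
  change (forall s, e c s = if Nat.eqb s c then 1 else 0).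
  induction c; intros s.
  - unfold e, Rsum. destruct s; simpl; lra.
  - assert (Hsplit : e (S c) s =
      e c s + Rsum (S c) (fun j => (-1) ^ (S j + s) * binom (S j) s * binom c j)).
    { unfold e. rewrite (Rsum_Sl (S c) (fun k => (-1) ^ (k + s) * binom k s * binom (S c) k)),
        (Rsum_Sl c (fun k => (-1) ^ (k + s) * binom k s * binom c k)), !binom_n0.
      rewrite (Rsum_ext (S c) (fun j => (-1) ^ (S j + s) * binom (S j) s * binom (S c) (S j))
        (fun j => (-1) ^ (S j + s) * binom (S j) s * binom c j +
                  (-1) ^ (S j + s) * binom (S j) s * binom c (S j)))
        by (intros; cbv beta; rewrite binom_SS; ring).
      rewrite Rsum_add, (Rsum_S c (fun j => _ * binom c (S j))), (binom_gt c (S c)) by lia.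
      lra. }
    rewrite Hsplit. destruct s as [| s].
    + rewrite (Rsum_ext (S c) _ (fun k => -1 * ((-1) ^ (k + 0) * binom k 0 * binom c k)))
        by (intros; rewrite !binom_n0; simpl; ring).
      rewrite Rsum_scal. fold (e c 0%nat). rewrite IHc. simpl. lra.
    + rewrite (Rsum_ext (S c) _ (fun k => -1 * ((-1) ^ (k + S s) * binom k (S s) * binom c k)
                                  + (-1) ^ (k + s) * binom k s * binom c k)).
      2:{ intros k _. rewrite binom_SS. replace (k + S s)%nat with (S (k + s)) by lia.
          replace (S k + S s)%nat with (S (S (k + s))) by lia. simpl. ring. }
      rewrite Rsum_add, Rsum_scal. fold (e c (S s)) (e c s). rewrite !IHc. simpl.
      destruct (Nat.eqb s c); lra.
Qed.

Lemma count_prob_symmetric n P s : symmetric n P ->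
  count_prob n P s =
  Rsum (S n) (fun k => (-1) ^ (k + s) * binom k s * (binom n k * Pk n P k (repeat true k))).
Proof.
  intros HP. unfold count_prob.
  rewrite (sumR_map_ext _ _ (fun r => Rsum (S n)
             (fun k => P r * ((-1) ^ (k + s) * binom k s * binom (count_true r) k)))).
  - rewrite sumR_map_Rsum. apply Rsum_ext. intros k Hk.
    rewrite <- binom_moment_symmetric by (auto; lia).
    unfold binom_moment. rewrite <- sumR_map_scal. apply sumR_map_ext. intros. lra.
  - intros r Hr. apply bools_length in Hr. pose proof (count_true_le r).
    rewrite <- binom_inversion, Rsum_scal. f_equal.
    symmetry. apply Rsum_trunc; [lia |]. intros k Hk. rewrite (binom_gt (count_true r) k) by lia. lra.
Qed.

(** * Correlation functions on the diagonal *)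

Lemma insert_all_repeat {A} (x : A) m :
  insert_all x (repeat x m) = repeat (repeat x (S m)) (S m).
Proof.
  induction m; [reflexivity |]. simpl. rewrite IHm. simpl. rewrite map_repeat. reflexivity.
Qed.

Lemma concat_repeat_repeat {A} (b : A) k n : concat (repeat (repeat b k) n) = repeat b (n * k).
Proof. induction n; simpl; [reflexivity |]. rewrite IHn, repeat_app. reflexivity. Qed.

Lemma perms_repeat {A} (x : A) m : perms (repeat x m) = repeat (repeat x m) (fact m).
Proof.
  induction m; [reflexivity |]. simpl repeat at 1. simpl perms.
  rewrite IHm, flat_map_concat_map, map_repeat, insert_all_repeat, concat_repeat_repeat.
  f_equal. simpl fact. lia.
Qed.

Lemma firstn_repeat_le {A} (x : A) i m : (i <= m)%nat -> firstn i (repeat x m) = repeat x i.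
Proof.
  revert m; induction i; intros m H; [reflexivity |].
  destruct m; [lia |]. simpl. rewrite IHi; auto; lia.
Qed.

Lemma skipn_repeat {A} (x : A) i m : skipn i (repeat x m) = repeat x (m - i).
Proof.
  revert m; induction i; intros m; [simpl; rewrite Nat.sub_0_r; reflexivity |].
  destruct m; [reflexivity |]. simpl. apply IHi.
Qed.

Lemma Gs_G N P m l r : (l <= m)%nat -> Gs N P m l r = G N P l r.
Proof.
  unfold G. induction m; intros H.
  - replace l with 0%nat by lia. reflexivity.
  - destruct (Nat.eq_dec l (S m)) as [-> | Hne]; [reflexivity |].
    simpl. replace (Nat.leb l m) with true by (symmetry; apply Nat.leb_le; lia). apply IHm. lia.
Qed.

(* On (1,...,1) all permutations contribute the same term, which turns the
   (k-1)! summands into a factor. *)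
Lemma G_ones_S N P m : G N P (S m) (repeat true (S m)) =
  Pk N P (S m) (repeat true (S m)) -
  INR (fact m) * Rsum m (fun j => / (INR (fact j) * INR (fact (m - j))) *
    G N P (S j) (repeat true (S j)) * Pk N P (m - j) (repeat true (m - j))).
Proof.
  unfold G at 1. simpl Gs.
  replace (match m with 0%nat => false | S m' => (m <=? m')%nat end) with false
    by (destruct m; [reflexivity | symmetry; apply Nat.leb_gt; lia]).
  simpl (tl _). simpl (hd _ _).
  rewrite perms_repeat, sumR_map_repeat, sumR_seq1. do 2 f_equal.
  apply Rsum_ext. intros j Hj. simpl (S j - 1)%nat. rewrite Nat.sub_0_r.
  rewrite firstn_repeat_le, skipn_repeat, Gs_G by lia. reflexivity.
Qed.

(** * Coefficients of an exponential power series *)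

(* [expcoef D] is the coefficient sequence of [g = exp F] with [F' = sum_j D (j+1) x^j],
   determined by [g' = F' g], i.e. [(k+1) b(k+1) = sum_(i<=k) D(i+1) b(k-i)];
   [expcoefs D k] lists [b k; ...; b 0] to make the recursion structural. *)
Fixpoint expcoefs (D : nat -> R) (k : nat) : list R :=
  match k with
  | O => [1]
  | S k' => (/ INR (S k') * Rsum (S k') (fun i => D (S i) * nth i (expcoefs D k') 0))
            :: expcoefs D k'
  end.

Definition expcoef D k := hd 0 (expcoefs D k).

Lemma nth_expcoefs D k i : (i <= k)%nat -> nth i (expcoefs D k) 0 = expcoef D (k - i).
Proof.
  revert i; induction k; intros i H.
  - replace i with 0%nat by lia. reflexivity.
  - destruct i; [reflexivity |]. simpl. apply IHk. lia.
Qed.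

Lemma expcoef_0 D : expcoef D 0 = 1.
Proof. reflexivity. Qed.

Lemma expcoef_S D k :
  expcoef D (S k) = / INR (S k) * Rsum (S k) (fun i => D (S i) * expcoef D (k - i)).
Proof.
  unfold expcoef at 1. simpl. f_equal. apply Rsum_ext. intros. rewrite nth_expcoefs by lia.
  reflexivity.
Qed.

(* [D j = C j / (j-1)!] are the coefficients of [F'] for [F x = sum_j C j x^j / j!]. *)
Definition dlog_coef (C : nat -> R) (j : nat) := C j / INR (fact (j - 1)).

Lemma dlog_coef_S C j : dlog_coef C (S j) = C (S j) / INR (fact j).
Proof. unfold dlog_coef. simpl (S j - 1)%nat. rewrite Nat.sub_0_r. reflexivity. Qed.

Lemma Pk_ones_expcoef N P (C : nat -> R) : (1 <= N)%nat ->
  Pk N P 0 [] = 1 ->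
  (forall j, (1 <= j)%nat -> (j <= N)%nat -> INR N ^ j * G N P j (repeat true j) = C j) ->
  forall k, (k <= N)%nat ->
  INR N ^ k * Pk N P k (repeat true k) = INR (fact k) * expcoef (dlog_coef C) k.
Proof.
  intros HN H0 HG k. induction k as [k IH] using lt_wf_ind. intros Hk.
  destruct k as [| m]; [simpl; rewrite H0, expcoef_0; lra |].
  pose proof (G_ones_S N P m) as HU.
  replace (Pk N P (S m) (repeat true (S m))) with (G N P (S m) (repeat true (S m)) +
    INR (fact m) * Rsum m (fun j => / (INR (fact j) * INR (fact (m - j))) *
      G N P (S j) (repeat true (S j)) * Pk N P (m - j) (repeat true (m - j)))) by lra.
  rewrite Rmult_plus_distr_l, HG by lia.
  rewrite expcoef_S, Rsum_S, Nat.sub_diag, expcoef_0.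
  assert (Hs : INR N ^ S m * (INR (fact m) * Rsum m (fun j => / (INR (fact j) * INR (fact (m - j))) *
      G N P (S j) (repeat true (S j)) * Pk N P (m - j) (repeat true (m - j)))) =
      INR (fact m) * Rsum m (fun i => dlog_coef C (S i) * expcoef (dlog_coef C) (m - i))).
  { rewrite <- Rmult_assoc, (Rmult_comm (INR N ^ S m)), Rmult_assoc, <- Rsum_scal. f_equal.
    apply Rsum_ext. intros j Hj.
    replace (S m) with (S j + (m - j))%nat at 1 by lia. rewrite pow_add, dlog_coef_S.
    pose proof (INR_fact_pos j). pose proof (INR_fact_pos (m - j)).
    transitivity (/ (INR (fact j) * INR (fact (m - j))) *
      (INR N ^ S j * G N P (S j) (repeat true (S j))) *
      (INR N ^ (m - j) * Pk N P (m - j) (repeat true (m - j)))); [ring |].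
    rewrite HG, IH by lia. field. lra. }
  rewrite Hs, dlog_coef_S. pose proof (INR_fact_pos m).
  replace (INR (fact (S m))) with (INR (S m) * INR (fact m)) by (rewrite <- mult_INR; reflexivity).
  assert (0 < INR (S m)) by (apply lt_0_INR; lia).
  field. lra.
Qed.

Lemma expcoef_geometric_bound D L : (forall j, (L < j)%nat -> D j = 0) ->
  exists K, 0 < K /\ forall k, Rabs (expcoef D k) * 16 ^ k <= K.
Proof.
  intros HD.
  set (Dm := Rsum L (fun i => Rabs (D (S i)) * 16 ^ (S i))).
  assert (HDm : 0 <= Dm) by (apply Rsum_ge0; intros; apply Rmult_le_pos; [apply Rabs_pos | apply pow_le; lra]).
  destruct (INR_unbounded Dm) as [k0 Hk0].
  set (a := fun k => Rabs (expcoef D k) * 16 ^ k).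
  assert (Ha : forall k, 0 <= a k) by (intros; apply Rmult_le_pos; [apply Rabs_pos | apply pow_le; lra]).
  set (K := 1 + Rsum (S k0) a).
  assert (HK0 : 0 < K) by (pose proof (Rsum_ge0 (S k0) _ Ha); unfold K; lra).
  exists K. split; [exact HK0 |]. fold a.
  intros k. induction k as [k IH] using lt_wf_ind.
  destruct (le_lt_dec k k0) as [Hk | Hk].
  { pose proof (Rsum_le_Rsum (S k) (S k0) _ Ha ltac:(lia)) as Hle.
    pose proof (Rsum_ge0 k _ Ha). rewrite Rsum_S in Hle. unfold K, a in *. lra. }
  (* beyond [k0], the factor [1/k] in the recursion beats the growth [Dm] *)
  destruct k as [| k]; [lia |]. unfold a. rewrite expcoef_S.
  assert (Hpos : 0 < INR (S k)) by (apply lt_0_INR; lia).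
  rewrite Rabs_mult, Rabs_inv, (Rabs_right (INR (S k))) by lra.
  assert (Hs : Rabs (Rsum (S k) (fun i => D (S i) * expcoef D (k - i))) * 16 ^ S k <= K * Dm).
  { eapply Rle_trans; [apply Rmult_le_compat_r; [apply pow_le; lra | apply Rsum_abs] |].
    rewrite Rmult_comm, <- Rsum_scal.
    apply Rle_trans with (Rsum (S k) (fun i => K * (Rabs (D (S i)) * 16 ^ S i))).
    - apply Rsum_le. intros i Hi. rewrite Rabs_mult.
      replace (16 ^ S k) with (16 ^ S i * 16 ^ (k - i)) by (rewrite <- pow_add; f_equal; lia).
      specialize (IH (k - i)%nat ltac:(lia)). unfold a in IH.
      pose proof (Rabs_pos (D (S i))). pose proof (pow_le 16 (S i) ltac:(lra)).
      transitivity (Rabs (D (S i)) * 16 ^ S i * (Rabs (expcoef D (k - i)) * 16 ^ (k - i)));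
        [right; ring |].
      rewrite (Rmult_comm K). apply Rmult_le_compat_l; [nra | exact IH].
    - rewrite Rsum_scal. apply Rmult_le_compat_l; [lra |]. unfold Dm.
      destruct (le_lt_dec (S k) L).
      + apply Rsum_le_Rsum; [| auto].
        intros; apply Rmult_le_pos; [apply Rabs_pos | apply pow_le; lra].
      + right. apply Rsum_trunc; [lia |]. intros i Hi. rewrite HD, Rabs_R0 by lia. ring. }
  assert (Dm <= INR (S k)) by (assert (INR k0 <= INR (S k)) by (apply le_INR; lia); lra).
  transitivity (/ INR (S k) * (Rabs (Rsum (S k) (fun i => D (S i) * expcoef D (k - i))) * 16 ^ S k));
    [right; ring |].
  transitivity (/ INR (S k) * (K * Dm));
    [apply Rmult_le_compat_l; [left; apply Rinv_0_lt_compat; lra | exact Hs] |].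
  apply (Rmult_le_reg_l (INR (S k))); auto. field_simplify; [nra | lra].
Qed.

Lemma Un_cv_const c : Un_cv (fun _ => c) c.
Proof. intros eps He. exists 0%nat. intros. unfold R_dist. rewrite Rminus_diag, Rabs_R0. lra. Qed.

Lemma Un_cv_ext u v l : (forall n, u n = v n) -> Un_cv v l -> Un_cv u l.
Proof. intros H Hv eps He. destruct (Hv eps He) as [N HN]. exists N. intros. rewrite H. auto. Qed.

Lemma Un_cv_eventually u v l N1 :
  (forall N, (N1 <= N)%nat -> u N = v N) -> Un_cv v l -> Un_cv u l.
Proof.
  intros H Hv eps He. destruct (Hv eps He) as [N2 HN2]. exists (max N1 N2). intros n Hn.
  rewrite H by lia. apply HN2. lia.
Qed.

Lemma Un_cv_mult_r c (u : nat -> R) l : Un_cv u l -> Un_cv (fun n => u n * c) (l * c).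
Proof. intros H. apply (CV_mult u (fun _ => c)); auto using Un_cv_const. Qed.

Lemma Un_cv_le u l K c : Un_cv u l -> (forall n, (K <= n)%nat -> u n <= c) -> l <= c.
Proof.
  intros Hu H. destruct (Rle_or_lt l c) as [| Hlt]; auto. exfalso.
  destruct (Hu (l - c) ltac:(lra)) as [N HN]. specialize (HN (max N K) ltac:(lia)).
  specialize (H (max N K) ltac:(lia)). unfold R_dist in HN. apply Rabs_def2 in HN. lra.
Qed.

Lemma Un_cv_ge u l K c : Un_cv u l -> (forall n, (K <= n)%nat -> c <= u n) -> c <= l.
Proof.
  intros Hu H. destruct (Rle_or_lt c l) as [| Hlt]; auto. exfalso.
  destruct (Hu (c - l) ltac:(lra)) as [N HN]. specialize (HN (max N K) ltac:(lia)).
  specialize (H (max N K) ltac:(lia)). unfold R_dist in HN. apply Rabs_def2 in HN. lra.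
Qed.

Lemma Un_cv_dist_le u l a K c :
  Un_cv u l -> (forall n, (K <= n)%nat -> Rabs (u n - a) <= c) -> Rabs (l - a) <= c.
Proof.
  intros Hu H. apply Rabs_le. split.
  - enough (-c + a <= l) by lra. apply (Un_cv_ge u l K); auto.
    intros n Hn. specialize (H n Hn). apply Rabs_le_between in H. lra.
  - enough (l <= c + a) by lra. apply (Un_cv_le u l K); auto.
    intros n Hn. specialize (H n Hn). apply Rabs_le_between in H. lra.
Qed.

Lemma Rsum_cv K (f : nat -> nat -> R) g :
  (forall k, Un_cv (fun N => f N k) (g k)) -> Un_cv (fun N => Rsum K (f N)) (Rsum K g).
Proof.
  intros H. induction K; [exact (Un_cv_const 0) |].
  rewrite Rsum_S. apply (Un_cv_ext _ (fun N => Rsum K (f N) + f N K)).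
  - intros; rewrite Rsum_S; reflexivity.
  - apply CV_plus; auto.
Qed.

Lemma Rsum_le_lim M LM n :
  (forall k, 0 <= M k) -> Un_cv (fun N => Rsum N M) LM -> Rsum n M <= LM.
Proof. intros HM Hc. apply (Un_cv_ge _ _ n _ Hc). intros m Hm. apply Rsum_le_Rsum; auto. Qed.

Lemma infinite_sum_Rsum f l : Un_cv (fun N => Rsum N f) l -> infinite_sum f l.
Proof.
  intros H eps He. destruct (H eps He) as [N HN]. exists N. intros n Hn.
  rewrite sum_f_R0_Rsum. apply HN. lia.
Qed.

Lemma Rsum_infinite_sum f l : infinite_sum f l -> Un_cv (fun N => Rsum N f) l.
Proof.
  intros H eps He. destruct (H eps He) as [N HN]. exists (S N). intros n Hn.
  destruct n; [lia |]. rewrite <- sum_f_R0_Rsum. apply HN. lia.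
Qed.

Lemma Series_Rsum g l : Un_cv (fun n => Rsum n g) l -> Series g = l.
Proof. intros H. apply is_series_unique, is_series_Reals, infinite_sum_Rsum, H. Qed.

Lemma Rsum_geom_cv c q : 0 <= q < 1 -> Un_cv (fun N => Rsum N (fun k => c * q ^ k)) (c / (1 - q)).
Proof.
  intros Hq.
  assert (Hs : is_series (fun n => q ^ n) (/ (1 - q)))
    by (apply is_series_geom; rewrite Rabs_right; lra).
  apply is_series_Reals, Rsum_infinite_sum in Hs.
  apply (Un_cv_ext _ (fun N => c * Rsum N (fun k => q ^ k))); [intros; apply Rsum_scal |].
  apply (CV_mult (fun _ => c)); [apply Un_cv_const | exact Hs].
Qed.

(* Tannery's theorem: dominated convergence for series.  The vanishing of [f N k]
   for [k > N] lets the sums be written with [N+1] terms. *)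
Lemma tannery (f : nat -> nat -> R) (g M : nat -> R) LM :
  (forall k, Un_cv (fun N => f N k) (g k)) ->
  (forall N k, Rabs (f N k) <= M k) ->
  Un_cv (fun N => Rsum N M) LM ->
  (forall N k, (N < k)%nat -> f N k = 0) ->
  exists L0, Un_cv (fun N => Rsum N g) L0 /\ Un_cv (fun N => Rsum (S N) (f N)) L0.
Proof.
  intros Hf HM HLM Hz.
  assert (HM0 : forall k, 0 <= M k) by (intros k; eapply Rle_trans; [apply Rabs_pos | apply (HM 0%nat)]).
  assert (Hg : forall k, Rabs (g k) <= M k).
  { intros k. replace (g k) with (g k - 0) by ring.
    apply (Un_cv_dist_le (fun N => f N k) _ 0 0); auto. intros. rewrite Rminus_0_r. auto. }
  assert (Hex : ex_series g).
  { apply ex_series_Rabs, (@ex_series_le R_AbsRing R_CompleteNormedModule _ M).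
    - intros n. change (norm (Rabs (g n))) with (Rabs (Rabs (g n))). rewrite Rabs_Rabsolu. apply Hg.
    - apply ex_series_Reals_1. exists LM. apply infinite_sum_Rsum. exact HLM. }
  apply ex_series_Reals_0 in Hex. destruct Hex as [L0 HS]. apply Rsum_infinite_sum in HS.
  exists L0. split; [exact HS |].
  assert (Htail : forall K, Rabs (L0 - Rsum K g) <= LM - Rsum K M).
  { intros K. apply (Un_cv_dist_le _ _ _ K _ HS). intros n Hn.
    eapply Rle_trans; [apply Rsum_sub_abs; auto |].
    pose proof (Rsum_le_lim M LM n HM0 HLM). lra. }
  intros eps He.
  destruct (HLM (eps / 3) ltac:(lra)) as [K HK].
  destruct (Rsum_cv K f g Hf (eps / 3) ltac:(lra)) as [N1 HN1].
  exists (max K N1). intros n Hn.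
  specialize (HK K ltac:(lia)). unfold R_dist in HK. pose proof (Rsum_le_lim M LM K HM0 HLM).
  rewrite Rabs_left1 in HK by lra.
  specialize (HN1 n ltac:(lia)). unfold R_dist in *.
  assert (H1 : Rabs (Rsum (S n) (f n) - Rsum K (f n)) <= LM - Rsum K M).
  { eapply Rle_trans; [apply Rsum_sub_abs; [lia | apply (HM n)] |].
    pose proof (Rsum_le_lim M LM (S n) HM0 HLM). lra. }
  specialize (Htail K).
  replace (Rsum (S n) (f n) - L0)
    with ((Rsum (S n) (f n) - Rsum K (f n)) + (Rsum K (f n) - Rsum K g) - (L0 - Rsum K g)) by ring.
  eapply Rle_lt_trans; [apply Rabs_triang |]. rewrite Rabs_Ropp.
  eapply Rle_lt_trans; [apply Rplus_le_compat_r, Rabs_triang | lra].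
Qed.

Definition fall_ratio (N k : nat) : R := binom N k * INR (fact k) / INR N ^ k.

Lemma fall_ratio_0 N : fall_ratio N 0 = 1.
Proof. unfold fall_ratio. simpl. rewrite binom_n0. lra. Qed.

Lemma fall_ratio_S N k : (1 <= N)%nat -> fall_ratio N (S k) = fall_ratio N k * (1 - INR k / INR N).
Proof.
  intros H. unfold fall_ratio. rewrite !binom_fact. simpl falling. simpl pow.
  assert (0 < INR N) by (apply lt_0_INR; lia). field. split; [lra | apply pow_nonzero; lra].
Qed.

Lemma fall_ratio_gt N k : (N < k)%nat -> fall_ratio N k = 0.
Proof. intros. unfold fall_ratio. rewrite binom_gt by lia. unfold Rdiv. ring. Qed.

Lemma fall_ratio_bounds N k : 0 <= fall_ratio N k <= 1.
Proof.
  destruct (le_lt_dec k N) as [Hk | Hk]; [| rewrite fall_ratio_gt by auto; lra].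
  destruct N as [| N'].
  { replace k with 0%nat by lia. rewrite fall_ratio_0. lra. }
  set (N := S N') in *. assert (0 < INR N) by (apply lt_0_INR; lia).
  induction k; [rewrite fall_ratio_0; lra |].
  rewrite fall_ratio_S by lia. destruct (IHk ltac:(lia)).
  assert (INR k < INR N) by (apply lt_INR; lia). pose proof (pos_INR k).
  assert (0 <= INR k / INR N <= 1).
  { split; [apply Rdiv_le_0_compat; lra |].
    unfold Rdiv. rewrite <- (Rinv_r (INR N)) by lra.
    apply Rmult_le_compat_r; [left; apply Rinv_0_lt_compat |]; lra. }
  split; [apply Rmult_le_pos; lra |]. assert (0 <= 1 - INR k / INR N <= 1) by lra. nra.
Qed.

Lemma fall_ratio_cv k : Un_cv (fun N => fall_ratio N k) 1.
Proof.
  induction k; [apply (Un_cv_ext _ (fun _ => 1)); [intros; apply fall_ratio_0 | apply Un_cv_const] |].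
  apply (Un_cv_eventually _ (fun N => fall_ratio N k * (1 - INR k * / INR N)) _ 1%nat).
  { intros. rewrite fall_ratio_S; auto. }
  assert (Hinv : Un_cv (fun n => / INR n) 0).
  { apply is_lim_seq_Reals. replace (Finite 0) with (Rbar_inv p_infty) by reflexivity.
    apply is_lim_seq_inv; [apply is_lim_seq_INR | discriminate]. }
  assert (Hc : Un_cv (fun N => fall_ratio N k * (1 - INR k * / INR N)) (1 * (1 - INR k * 0)))
    by (apply CV_mult, CV_minus, CV_mult; auto using Un_cv_const).
  rewrite Rmult_0_r, Rminus_0_r, Rmult_1_r in Hc. exact Hc.
Qed.

(** * Finite differences of [s |-> e^(ius)] *)

Definition fdiff (h : nat -> R) (k : nat) : R :=
  Rsum (S k) (fun s => (-1) ^ (k + s) * binom k s * h s).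

Lemma fdiff_0 h : fdiff h 0 = h 0%nat.
Proof. unfold fdiff, Rsum. simpl. lra. Qed.

Lemma fdiff_S h k : fdiff h (S k) = fdiff (fun s => h (S s)) k - fdiff h k.
Proof.
  unfold fdiff.
  rewrite (Rsum_Sl (S k) (fun s => (-1) ^ (S k + s) * binom (S k) s * h s)),
    (Rsum_Sl k (fun s => (-1) ^ (k + s) * binom k s * h s)), !binom_n0.
  rewrite (Rsum_ext (S k) (fun s => (-1) ^ (S k + S s) * binom (S k) (S s) * h (S s))
    (fun s => (-1) ^ (k + s) * binom k s * h (S s) + (-1) ^ (k + s) * binom k (S s) * h (S s))).
  2:{ intros s _. rewrite binom_SS. replace (S k + S s)%nat with (S (S (k + s))) by lia. simpl. ring. }
  rewrite Rsum_add, (Rsum_S k (fun s => (-1) ^ (k + s) * binom k (S s) * h (S s))),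
    (binom_gt k (S k)) by lia.
  rewrite (Rsum_ext k (fun s => (-1) ^ (k + S s) * binom k (S s) * h (S s))
    (fun s => -1 * ((-1) ^ (k + s) * binom k (S s) * h (S s)))).
  2:{ intros s _. replace (k + S s)%nat with (S (k + s)) by lia. simpl. ring. }
  rewrite Rsum_scal. replace (S k + 0)%nat with (S (k + 0)) by lia. simpl ((-1) ^ S _). ring.
Qed.

Lemma fdiff_lin h1 h2 a c k : fdiff (fun s => a * h1 s + c * h2 s) k = a * fdiff h1 k + c * fdiff h2 k.
Proof. unfold fdiff. rewrite <- !Rsum_scal, <- Rsum_add. apply Rsum_ext. intros. ring. Qed.

Lemma fdiff_ext h1 h2 k : (forall s, h1 s = h2 s) -> fdiff h1 k = fdiff h2 k.
Proof. intros H. unfold fdiff. apply Rsum_ext. intros. rewrite H. reflexivity. Qed.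

Section ExpDifferences.

Variable u : R.

(* Real and imaginary parts of [(e^(iu) - 1)^k]. *)
Definition fdiff_cos k := fdiff (fun s => cos (u * INR s)) k.
Definition fdiff_sin k := fdiff (fun s => sin (u * INR s)) k.

Lemma fdiff_cos_0 : fdiff_cos 0 = 1.
Proof. unfold fdiff_cos. rewrite fdiff_0. simpl. rewrite Rmult_0_r, cos_0. reflexivity. Qed.

Lemma fdiff_sin_0 : fdiff_sin 0 = 0.
Proof. unfold fdiff_sin. rewrite fdiff_0. simpl. rewrite Rmult_0_r, sin_0. reflexivity. Qed.

Lemma fdiff_cos_S k : fdiff_cos (S k) = fdiff_cos k * (cos u - 1) - fdiff_sin k * sin u.
Proof.
  unfold fdiff_cos, fdiff_sin. rewrite fdiff_S.
  rewrite (fdiff_ext _ (fun s => cos u * cos (u * INR s) + (- sin u) * sin (u * INR s))).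
  - rewrite fdiff_lin. ring.
  - intros s. rewrite S_INR, Rmult_plus_distr_l, Rmult_1_r, cos_plus. ring.
Qed.

Lemma fdiff_sin_S k : fdiff_sin (S k) = fdiff_cos k * sin u + fdiff_sin k * (cos u - 1).
Proof.
  unfold fdiff_cos, fdiff_sin. rewrite fdiff_S.
  rewrite (fdiff_ext _ (fun s => sin u * cos (u * INR s) + cos u * sin (u * INR s))).
  - rewrite fdiff_lin. ring.
  - intros s. rewrite S_INR, Rmult_plus_distr_l, Rmult_1_r, sin_plus. ring.
Qed.

Lemma fdiff_cis_add i j :
  fdiff_cos (i + j) = fdiff_cos i * fdiff_cos j - fdiff_sin i * fdiff_sin j /\
  fdiff_sin (i + j) = fdiff_cos i * fdiff_sin j + fdiff_sin i * fdiff_cos j.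
Proof.
  induction j.
  - rewrite Nat.add_0_r, fdiff_cos_0, fdiff_sin_0. split; ring.
  - replace (i + S j)%nat with (S (i + j)) by lia. rewrite !fdiff_cos_S, !fdiff_sin_S.
    destruct IHj as [-> ->]. split; ring.
Qed.

Lemma fdiff_cis_bound k : Rabs (fdiff_cos k) <= 3 ^ k /\ Rabs (fdiff_sin k) <= 3 ^ k.
Proof.
  induction k.
  - rewrite fdiff_cos_0, fdiff_sin_0, Rabs_R0, Rabs_R1. simpl. lra.
  - rewrite fdiff_cos_S, fdiff_sin_S. destruct IHk as [H1 H2].
    assert (Hc : Rabs (cos u - 1) <= 2) by (pose proof (COS_bound u); apply Rabs_le; lra).
    assert (Hs : Rabs (sin u) <= 1) by (pose proof (SIN_bound u); apply Rabs_le; lra).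
    pose proof (Rabs_pos (fdiff_cos k)). pose proof (Rabs_pos (fdiff_sin k)).
    pose proof (Rabs_pos (sin u)). pose proof (Rabs_pos (cos u - 1)).
    simpl pow. split; (eapply Rle_trans; [apply Rabs_triang |]);
      rewrite ?Rabs_Ropp, !Rabs_mult, ?Rabs_Ropp; nra.
Qed.

End ExpDifferences.

(** * The series [sum_k b_k z^k] of an exponential *)

Lemma is_pseries_lin (a b : nat -> R) x la lb c d :
  is_pseries a x la -> is_pseries b x lb ->
  is_pseries (fun n => c * a n + d * b n) x (c * la + d * lb).
Proof.
  intros Ha Hb.
  exact (is_pseries_plus _ _ x _ _ (is_pseries_scal c a x la (Rmult_comm _ _) Ha)
           (is_pseries_scal d b x lb (Rmult_comm _ _) Hb)).
Qed.

Lemma is_pseries_Rsum L (A : nat -> nat -> R) (x : R) (l a : nat -> R) (la : R) :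
  is_pseries a x la -> (forall i, is_pseries (A i) x (l i)) ->
  is_pseries (fun n => Rsum L (fun i => A i n)) x (Rsum L l).
Proof.
  intros Ha H. induction L.
  - pose proof (is_pseries_lin a a x la la 0 0 Ha Ha) as H0.
    replace (0 * la + 0 * la) with 0 in H0 by ring.
    eapply is_pseries_ext; [| exact H0]. intros n. cbv beta. rewrite Rsum_0.
    change (@eq R (0 * a n + 0 * a n) 0). ring.
  - pose proof (is_pseries_lin _ _ x _ _ 1 1 IHL (H L)) as H0.
    rewrite Rsum_S. replace (Rsum L l + l L) with (1 * Rsum L l + 1 * l L) by ring.
    eapply is_pseries_ext; [| exact H0]. intros n. cbv beta. rewrite Rsum_S.
    change (@eq R (1 * Rsum L (fun i => A i n) + 1 * A L n) (Rsum L (fun i => A i n) + A L n)). ring.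
Qed.

Lemma is_pseries_PSeries a t : Rbar_lt (Rabs t) (CV_radius a) -> is_pseries a t (PSeries a t).
Proof. intros H. apply PSeries_correct, CV_disk_correct, CV_disk_inside, H. Qed.

Lemma is_derive_PSeries_shifts L (a a1 a2 c1 c2 : nat -> R) t :
  Rbar_lt (Rabs t) (CV_radius a) -> Rbar_lt (Rabs t) (CV_radius a1) ->
  Rbar_lt (Rabs t) (CV_radius a2) ->
  (forall n, PS_derive a n =
     Rsum L (fun i => c1 i * PS_incr_n a1 i n + c2 i * PS_incr_n a2 i n)) ->
  is_derive (PSeries a) t (Rsum L (fun i => c1 i * t ^ i) * PSeries a1 t +
                           Rsum L (fun i => c2 i * t ^ i) * PSeries a2 t).
Proof.
  intros Ha Ha1 Ha2 Hcoef.
  assert (Hincr : forall b i, Rbar_lt (Rabs t) (CV_radius b) ->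
            is_pseries (PS_incr_n b i) t (t ^ i * PSeries b t)).
  { intros b i Hb. pose proof (is_pseries_incr_n b i t _ (is_pseries_PSeries b t Hb)) as H.
    rewrite pow_n_pow in H. exact H. }
  assert (Hs : is_pseries (PS_derive a) t
    (Rsum L (fun i => c1 i * (t ^ i * PSeries a1 t) + c2 i * (t ^ i * PSeries a2 t)))).
  { eapply is_pseries_ext; [intros n; symmetry; apply Hcoef |].
    apply (is_pseries_Rsum L _ t _ a1 (PSeries a1 t)); [apply is_pseries_PSeries, Ha1 |].
    intros i. apply is_pseries_lin; apply Hincr; assumption. }
  apply is_pseries_unique in Hs.
  replace (Rsum L (fun i => c1 i * t ^ i) * PSeries a1 t + Rsum L (fun i => c2 i * t ^ i) * PSeries a2 t)
    with (PSeries (PS_derive a) t).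
  - apply is_derive_PSeries, Ha.
  - rewrite Hs, Rsum_add, (Rmult_comm (Rsum L _)), (Rmult_comm (Rsum L _)), <- !Rsum_scal.
    f_equal; apply Rsum_ext; intros; ring.
Qed.

Lemma is_derive_Rsum L (F : nat -> R -> R) (dF : nat -> R) t :
  (forall i, is_derive (F i) t (dF i)) -> is_derive (fun x => Rsum L (fun i => F i x)) t (Rsum L dF).
Proof.
  intros H. induction L.
  - eapply is_derive_ext; [| apply (is_derive_const 0)]. intros. rewrite Rsum_0. reflexivity.
  - eapply is_derive_ext; [| rewrite Rsum_S; apply (is_derive_plus _ _ t _ _ IHL (H L))].
    intros x. rewrite Rsum_S. reflexivity.
Qed.

(* If [g = g1 + i g2] solves [g' = F' g] with [F = R0 + i I0], then [e^(-F) g] is constant. *)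
Lemma exp_rotation_derive_0 (R0 I0 g1 g2 : R -> R) (t r i : R) :
  is_derive R0 t r -> is_derive I0 t i ->
  is_derive g1 t (r * g1 t - i * g2 t) -> is_derive g2 t (r * g2 t + i * g1 t) ->
  is_derive (fun x => exp (- R0 x) * (g1 x * cos (I0 x) + g2 x * sin (I0 x))) t 0 /\
  is_derive (fun x => exp (- R0 x) * (g2 x * cos (I0 x) - g1 x * sin (I0 x))) t 0.
Proof.
  intros HR HI H1 H2.
  assert (ED : forall f l, is_derive f t l -> Derive (fun x => f x) t = l)
    by (intros; apply is_derive_unique; assumption).
  split; auto_derive; repeat split; try (eexists; eassumption); try exact I;
    rewrite (ED R0 _ HR), (ED I0 _ HI), (ED g1 _ H1), (ED g2 _ H2); ring.
Qed.

Lemma is_derive_monomial c n t : is_derive (fun x => c * x ^ S n) t (c * (INR (S n) * t ^ n)).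
Proof. auto_derive; auto. rewrite S_INR. destruct n; simpl; ring. Qed.

Lemma Rsum_eq_truncated n L (f : nat -> R) :
  (forall i, (L <= i)%nat -> f i = 0) ->
  Rsum (S n) f = Rsum L (fun i => if le_lt_dec i n then f i else 0).
Proof.
  intros Hf. set (g := fun i => if le_lt_dec i n then f i else 0).
  transitivity (Rsum (max (S n) L) g).
  - rewrite (Rsum_trunc (S n) (max (S n) L) g); [| lia |].
    + apply Rsum_ext. intros k Hk. unfold g. destruct (le_lt_dec k n); [reflexivity | lia].
    + intros k Hk. unfold g. destruct (le_lt_dec k n); [lia | reflexivity].
  - apply Rsum_trunc; [lia |]. intros k Hk. unfold g. destruct (le_lt_dec k n); auto.
    apply Hf; lia.
Qed.

Section ExpSeries.

(* [zr k] and [zi k] are the real and imaginary parts of [z^k] for a complex number [z]. *)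
Variables (D zr zi : nat -> R) (L : nat) (K : R).
Hypothesis D_support : forall j, (L < j)%nat -> D j = 0.
Hypothesis expcoef_bound : forall k, Rabs (expcoef D k) * 16 ^ k <= K.
Hypothesis zr_0 : zr 0 = 1.
Hypothesis zi_0 : zi 0 = 0.
Hypothesis z_add : forall i j,
  zr (i + j) = zr i * zr j - zi i * zi j /\ zi (i + j) = zr i * zi j + zi i * zr j.
Hypothesis z_bound : forall k, Rabs (zr k) <= 3 ^ k /\ Rabs (zi k) <= 3 ^ k.

Definition exp_re_coef n := expcoef D n * zr n.
Definition exp_im_coef n := expcoef D n * zi n.

Lemma exp_coef_bound n :
  Rabs (exp_re_coef n) <= K * (3 / 16) ^ n /\ Rabs (exp_im_coef n) <= K * (3 / 16) ^ n.
Proof.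
  unfold exp_re_coef, exp_im_coef. rewrite !Rabs_mult. destruct (z_bound n) as [H1 H2].
  replace ((3 / 16) ^ n) with (/ 16 ^ n * 3 ^ n)
    by (unfold Rdiv; rewrite Rpow_mult_distr, pow_inv; ring).
  assert (0 < 16 ^ n) by (apply pow_lt; lra).
  assert (Hb : Rabs (expcoef D n) <= K * / 16 ^ n).
  { apply (Rmult_le_reg_r (16 ^ n)); auto. specialize (expcoef_bound n). field_simplify; lra. }
  pose proof (Rabs_pos (expcoef D n)). pose proof (Rabs_pos (zr n)). pose proof (Rabs_pos (zi n)).
  rewrite <- Rmult_assoc. split; apply Rmult_le_compat; auto.
Qed.

Lemma exp_coef_radius (a : nat -> R) t :
  (forall n, Rabs (a n) <= K * (3 / 16) ^ n) -> Rabs t < 3 -> Rbar_lt (Rabs t) (CV_radius a).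
Proof.
  intros Ha Ht. apply Rbar_lt_le_trans with (Finite 3); [simpl; auto |].
  apply Rbar_not_lt_le. intros Hc. rewrite <- (Rabs_right 3) in Hc by lra.
  apply CV_disk_outside in Hc. apply Hc, is_lim_seq_abs_0.
  apply (is_lim_seq_le_le (fun _ => 0) _ (fun n => K * (9 / 16) ^ n)).
  - intros n. split; [apply Rabs_pos |]. rewrite Rabs_mult, <- RPow_abs, (Rabs_right 3) by lra.
    replace ((9 / 16) ^ n) with ((3 / 16) ^ n * 3 ^ n) by (rewrite <- Rpow_mult_distr; f_equal; lra).
    rewrite <- Rmult_assoc. apply Rmult_le_compat_r; [apply pow_le; lra | apply Ha].
  - apply is_lim_seq_const.
  - replace (Finite 0) with (Rbar_mult K 0) by (simpl; f_equal; ring).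
    apply is_lim_seq_scal_l, is_lim_seq_geom. rewrite Rabs_right; lra.
Qed.

Lemma exp_re_coef_radius t : Rabs t < 3 -> Rbar_lt (Rabs t) (CV_radius exp_re_coef).
Proof. intros. apply exp_coef_radius; auto. intros; apply exp_coef_bound. Qed.

Lemma exp_im_coef_radius t : Rabs t < 3 -> Rbar_lt (Rabs t) (CV_radius exp_im_coef).
Proof. intros. apply exp_coef_radius; auto. intros; apply exp_coef_bound. Qed.

(* The recursion of [expcoef] is [g' = F' g] coefficientwise; multiplying out [z^(n+1) = z^(i+1) z^(n-i)]
   splits it into real and imaginary parts. *)
Lemma PS_derive_exp_coef n :
  PS_derive exp_re_coef n = Rsum L (fun i => D (S i) * zr (S i) * PS_incr_n exp_re_coef i n
                                          + - (D (S i) * zi (S i)) * PS_incr_n exp_im_coef i n) /\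
  PS_derive exp_im_coef n = Rsum L (fun i => D (S i) * zr (S i) * PS_incr_n exp_im_coef i n
                                          + D (S i) * zi (S i) * PS_incr_n exp_re_coef i n).
Proof.
  assert (Hn : INR (S n) <> 0) by (apply not_0_INR; lia).
  assert (Hrec : forall w, INR (S n) * (expcoef D (S n) * w) =
            Rsum L (fun i => if le_lt_dec i n then D (S i) * expcoef D (n - i) * w else 0)).
  { intros w. rewrite <- (Rsum_eq_truncated n L) by (intros i Hi; rewrite D_support by lia; ring).
    rewrite expcoef_S, (Rsum_ext (S n) (fun i => D (S i) * expcoef D (n - i) * w)
      (fun i => w * (D (S i) * expcoef D (n - i))))
      by (intros; ring).
    rewrite Rsum_scal. field. exact Hn. }
  unfold PS_derive. split; [unfold exp_re_coef at 1 | unfold exp_im_coef at 1];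
    rewrite Hrec; apply Rsum_ext; intros i _; rewrite !PS_incr_n_simplify;
    unfold exp_re_coef, exp_im_coef; destruct (le_lt_dec i n); try (compute [zero]; simpl; ring);
    replace (S n) with (S i + (n - i))%nat by lia;
    destruct (z_add (S i) (n - i)) as [Er Ei]; rewrite ?Er, ?Ei; ring.
Qed.

Definition exp_series_re t := PSeries exp_re_coef t.
Definition exp_series_im t := PSeries exp_im_coef t.

Definition dexpo_re t := Rsum L (fun i => D (S i) * zr (S i) * t ^ i).
Definition dexpo_im t := Rsum L (fun i => D (S i) * zi (S i) * t ^ i).
Definition expo_series_re t := Rsum L (fun i => D (S i) / INR (S i) * zr (S i) * t ^ S i).
Definition expo_series_im t := Rsum L (fun i => D (S i) / INR (S i) * zi (S i) * t ^ S i).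

Lemma exp_series_derive t : Rabs t < 3 ->
  is_derive exp_series_re t (dexpo_re t * exp_series_re t - dexpo_im t * exp_series_im t) /\
  is_derive exp_series_im t (dexpo_re t * exp_series_im t + dexpo_im t * exp_series_re t).
Proof.
  intros Ht. pose proof (exp_re_coef_radius t Ht). pose proof (exp_im_coef_radius t Ht).
  split.
  - replace (dexpo_re t * exp_series_re t - dexpo_im t * exp_series_im t) with
      (dexpo_re t * exp_series_re t +
       Rsum L (fun i => - (D (S i) * zi (S i)) * t ^ i) * exp_series_im t).
    + apply is_derive_PSeries_shifts; auto. intros n. apply PS_derive_exp_coef.
    + unfold dexpo_im. rewrite (Rsum_ext L _ (fun i => -1 * (D (S i) * zi (S i) * t ^ i)))
        by (intros; ring). rewrite Rsum_scal. ring.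
  - apply is_derive_PSeries_shifts; auto. intros n. apply PS_derive_exp_coef.
Qed.

Lemma expo_series_derive t : is_derive expo_series_re t (dexpo_re t) /\ is_derive expo_series_im t (dexpo_im t).
Proof.
  split; apply is_derive_Rsum; intros i;
  [ replace (D (S i) * zr (S i) * t ^ i) with (D (S i) / INR (S i) * zr (S i) * (INR (S i) * t ^ i))
  | replace (D (S i) * zi (S i) * t ^ i) with (D (S i) / INR (S i) * zi (S i) * (INR (S i) * t ^ i)) ];
  try apply is_derive_monomial;
  assert (INR (S i) <> 0) by (apply not_0_INR; lia); field; auto.
Qed.

Lemma exp_series_at_1 :
  exp_series_re 1 = exp (expo_series_re 1) * cos (expo_series_im 1) /\
  exp_series_im 1 = exp (expo_series_re 1) * sin (expo_series_im 1).
Proof.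
  set (F := expo_series_re). set (G := expo_series_im).
  set (g1 := exp_series_re). set (g2 := exp_series_im).
  set (H1 := fun x => exp (- F x) * (g1 x * cos (G x) + g2 x * sin (G x))).
  set (H2 := fun x => exp (- F x) * (g2 x * cos (G x) - g1 x * sin (G x))).
  assert (Hd : forall t, 0 <= t <= 1 -> is_derive H1 t 0 /\ is_derive H2 t 0).
  { intros t Ht. assert (Ht3 : Rabs t < 3) by (rewrite Rabs_right; lra).
    destruct (expo_series_derive t), (exp_series_derive t Ht3).
    apply exp_rotation_derive_0 with (r := dexpo_re t) (i := dexpo_im t); auto. }
  assert (E1 : H1 0 = H1 1) by (apply eq_is_derive; [intros; apply Hd; auto | lra]).
  assert (E2 : H2 0 = H2 1) by (apply eq_is_derive; [intros; apply Hd; auto | lra]).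
  assert (F0 : F 0 = 0 /\ G 0 = 0).
  { unfold F, G, expo_series_re, expo_series_im.
    split; (transitivity (Rsum L (fun _ => 0)); [apply Rsum_ext; intros; simpl; ring | apply Rsum_zero]). }
  assert (g0 : g1 0 = 1 /\ g2 0 = 0).
  { unfold g1, g2, exp_series_re, exp_series_im. rewrite !PSeries_0.
    unfold exp_re_coef, exp_im_coef. rewrite expcoef_0, zr_0, zi_0. split; ring. }
  unfold H1, H2 in E1, E2. destruct F0 as [HF0 HG0], g0 as [Hg10 Hg20].
  rewrite HF0, HG0, Hg10, Hg20, Ropp_0, exp_0, cos_0, sin_0, exp_Ropp in E1, E2.
  pose proof (exp_pos (F 1)) as Hexp. pose proof (sin2_cos2 (G 1)) as Hsc. unfold Rsqr in Hsc.
  assert (A1 : g1 1 * cos (G 1) + g2 1 * sin (G 1) = exp (F 1)).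
  { apply (Rmult_eq_reg_l (/ exp (F 1))); [| apply Rinv_neq_0_compat; lra].
    rewrite Rinv_l; lra. }
  assert (A2 : g2 1 * cos (G 1) - g1 1 * sin (G 1) = 0).
  { apply (Rmult_eq_reg_l (/ exp (F 1))); [| apply Rinv_neq_0_compat; lra]. lra. }
  split.
  - transitivity (g1 1 * (sin (G 1) * sin (G 1) + cos (G 1) * cos (G 1))); [rewrite Hsc; ring |].
    transitivity (cos (G 1) * (g1 1 * cos (G 1) + g2 1 * sin (G 1)) -
                  sin (G 1) * (g2 1 * cos (G 1) - g1 1 * sin (G 1))); [ring |].
    rewrite A1, A2. ring.
  - transitivity (g2 1 * (sin (G 1) * sin (G 1) + cos (G 1) * cos (G 1))); [rewrite Hsc; ring |].
    transitivity (sin (G 1) * (g1 1 * cos (G 1) + g2 1 * sin (G 1)) +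
                  cos (G 1) * (g2 1 * cos (G 1) - g1 1 * sin (G 1))); [ring |].
    rewrite A1, A2. ring.
Qed.

Lemma exp_series_sum :
  infinite_sum exp_re_coef (exp (expo_series_re 1) * cos (expo_series_im 1)) /\
  infinite_sum exp_im_coef (exp (expo_series_re 1) * sin (expo_series_im 1)).
Proof.
  destruct exp_series_at_1 as [<- <-].
  assert (H1 : Rabs 1 < 3) by (rewrite Rabs_R1; lra).
  split; [pose proof (exp_re_coef_radius 1 H1) as Hr | pose proof (exp_im_coef_radius 1 H1) as Hr];
    apply is_pseries_PSeries, is_pseries_Reals in Hr;
    intros eps He; destruct (Hr eps He) as [N HN]; exists N; intros n Hn;
    (erewrite sum_eq; [apply HN, Hn |]); intros; cbv beta; rewrite pow1; ring.
Qed.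

End ExpSeries.

(** * The limit law *)

Lemma pow_half_le s k : (s <= k)%nat -> (/ 2) ^ k <= (/ 2) ^ s.
Proof.
  intros H. replace k with (s + (k - s))%nat by lia. rewrite pow_add.
  assert (0 <= (/ 2) ^ s) by (apply pow_le; lra).
  assert ((/ 2) ^ (k - s) <= 1) by (rewrite <- (pow1 (k - s)); apply pow_incr; lra).
  assert (0 <= (/ 2) ^ (k - s)) by (apply pow_le; lra). nra.
Qed.

Section LimitLaw.

Variables (b : nat -> R) (K : R).
Hypothesis b_bound : forall k, Rabs (b k) * 16 ^ k <= K.

Lemma inclusion_exclusion_term_bound w k s : 0 <= w <= 1 ->
  Rabs ((-1) ^ (k + s) * binom k s * (w * b k)) <= K * (/ 2) ^ s * (/ 2) ^ k.
Proof.
  intros Hw.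
  assert (HK0 : 0 <= K) by (specialize (b_bound 0%nat); pose proof (Rabs_pos (b 0%nat)); simpl in *; lra).
  rewrite !Rabs_mult, pow_1_abs, Rmult_1_l, (Rabs_right (binom k s)), (Rabs_right w)
    by (apply Rle_ge; try apply binom_ge0; lra).
  assert (0 <= (/ 2) ^ s) by (apply pow_le; lra). assert (0 <= (/ 2) ^ k) by (apply pow_le; lra).
  destruct (le_lt_dec s k) as [Hsk | Hsk].
  2:{ rewrite binom_gt by lia. rewrite Rmult_0_l. apply Rmult_le_pos; [apply Rmult_le_pos |]; lra. }
  (* [binom k s <= 2^k] against [|b k| <= K 16^-k] leaves [(1/8)^k <= (1/2)^s (1/2)^k] *)
  assert (Hb : Rabs (b k) <= K * (/ 16) ^ k).
  { specialize (b_bound k). assert (0 < 16 ^ k) by (apply pow_lt; lra). rewrite pow_inv.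
    apply (Rmult_le_reg_r (16 ^ k)); auto. field_simplify; lra. }
  pose proof (binom_le_pow2 k s). pose proof (binom_ge0 k s). pose proof (Rabs_pos (b k)).
  assert (E : 2 ^ k * (K * (/ 16) ^ k) = K * ((/ 2) ^ k * (/ 4) ^ k)).
  { rewrite <- Rpow_mult_distr, (Rmult_comm K), <- Rmult_assoc, <- Rpow_mult_distr.
    replace (2 * / 16) with (/ 2 * / 4) by field. ring. }
  assert ((/ 4) ^ k <= (/ 2) ^ s) by (transitivity ((/ 2) ^ k); [apply pow_incr; lra | apply pow_half_le; auto]).
  assert (0 <= (/ 4) ^ k) by (apply pow_le; lra).
  transitivity (binom k s * Rabs (b k)); [assert (0 <= binom k s * Rabs (b k)) by nra; nra |].
  transitivity (2 ^ k * (K * (/ 16) ^ k)); [apply Rmult_le_compat; auto |].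
  rewrite E, Rmult_assoc. apply Rmult_le_compat_l; auto.
  rewrite Rmult_comm. apply Rmult_le_compat_r; auto.
Qed.

(* For [b = expcoef (dlog_coef C)], [p N s] is the count probability [p_N(s)]. *)
Definition p (N s : nat) : R :=
  Rsum (S N) (fun k => (-1) ^ (k + s) * binom k s * (fall_ratio N k * b k)).

Definition plim (s : nat) : R := Series (fun k => (-1) ^ (k + s) * binom k s * b k).

Lemma p_cv s : Un_cv (fun N => p N s) (plim s).
Proof.
  destruct (tannery (fun N k => (-1) ^ (k + s) * binom k s * (fall_ratio N k * b k))
    (fun k => (-1) ^ (k + s) * binom k s * b k)
    (fun k => K * (/ 2) ^ s * (/ 2) ^ k) (K * (/ 2) ^ s / (1 - / 2))) as [L0 [HL1 HL2]].
  - intros k. apply (Un_cv_ext _ (fun N => (-1) ^ (k + s) * binom k s * (fall_ratio N k * b k))); [reflexivity |].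
    replace ((-1) ^ (k + s) * binom k s * b k) with ((-1) ^ (k + s) * binom k s * (1 * b k)) by ring.
    apply (CV_mult (fun _ => (-1) ^ (k + s) * binom k s)); [apply Un_cv_const |].
    apply Un_cv_mult_r, fall_ratio_cv.
  - intros N k. apply inclusion_exclusion_term_bound, fall_ratio_bounds.
  - apply Rsum_geom_cv. lra.
  - intros N k Hk. rewrite fall_ratio_gt by auto. ring.
  - unfold plim. rewrite (Series_Rsum _ _ HL1). exact HL2.
Qed.

Lemma p_bound N s : Rabs (p N s) <= 2 * K * (/ 2) ^ s.
Proof.
  assert (HK0 : 0 <= K * (/ 2) ^ s).
  { apply Rmult_le_pos; [| apply pow_le; lra].
    specialize (b_bound 0%nat). pose proof (Rabs_pos (b 0%nat)). simpl in *. lra. }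
  assert (Hgeom : Rsum (S N) (fun k => 1 * (/ 2) ^ k) <= 1 / (1 - / 2))
    by (apply Rsum_le_lim; [intros; rewrite Rmult_1_l; apply pow_le; lra | apply Rsum_geom_cv; lra]).
  replace (1 / (1 - / 2)) with 2 in Hgeom by field.
  unfold p. eapply Rle_trans; [apply Rsum_abs |].
  eapply Rle_trans; [apply Rsum_le; intros k _; apply inclusion_exclusion_term_bound, fall_ratio_bounds |].
  rewrite (Rsum_ext _ _ (fun k => K * (/ 2) ^ s * (1 * (/ 2) ^ k))) by (intros; ring).
  rewrite Rsum_scal. nra.
Qed.

Lemma p_gt N s : (N < s)%nat -> p N s = 0.
Proof.
  intros Hs. unfold p. rewrite <- (Rsum_zero (S N)).
  apply Rsum_ext. intros k Hk. rewrite binom_gt by lia. ring.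
Qed.

(* Exchanging the two finite sums turns moments of [p N] into forward differences. *)
Lemma p_moment (h : nat -> R) N :
  Rsum (S N) (fun s => p N s * h s) = Rsum (S N) (fun k => fall_ratio N k * b k * fdiff h k).
Proof.
  unfold p.
  transitivity (Rsum (S N) (fun s => Rsum (S N)
    (fun k => (-1) ^ (k + s) * binom k s * (fall_ratio N k * b k) * h s))).
  { apply Rsum_ext. intros s _. rewrite Rmult_comm, <- Rsum_scal. apply Rsum_ext. intros. ring. }
  rewrite Rsum_swap. apply Rsum_ext. intros k Hk. unfold fdiff. rewrite <- Rsum_scal.
  rewrite (Rsum_trunc (S k) (S N)) by (lia || (intros s Hs; rewrite (binom_gt k s) by lia; ring)).
  apply Rsum_ext. intros. ring.
Qed.

Lemma plim_moment (h : nat -> R) l :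
  (forall s, Rabs (h s) <= 1) ->
  (forall k, Rabs (b k * fdiff h k) <= K * (3 / 16) ^ k) ->
  infinite_sum (fun k => b k * fdiff h k) l -> infinite_sum (fun s => plim s * h s) l.
Proof.
  intros Hh Hdb Hl.
  destruct (tannery (fun N s => p N s * h s) (fun s => plim s * h s)
    (fun s => 2 * K * (/ 2) ^ s) (2 * K / (1 - / 2))) as [LA [HA1 HA2]].
  - intros s. apply Un_cv_mult_r, p_cv.
  - intros N s. rewrite Rabs_mult. specialize (Hh s). pose proof (p_bound N s).
    pose proof (Rabs_pos (h s)). pose proof (Rabs_pos (p N s)). nra.
  - apply Rsum_geom_cv. lra.
  - intros N s Hs. rewrite p_gt by auto. ring.
  - destruct (tannery (fun N k => fall_ratio N k * b k * fdiff h k) (fun k => b k * fdiff h k)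
      (fun k => K * (3 / 16) ^ k) (K / (1 - 3 / 16))) as [LB [HB1 HB2]].
    + intros k. apply (Un_cv_ext _ (fun N => fall_ratio N k * (b k * fdiff h k))); [intros; ring |].
      pose proof (Un_cv_mult_r (b k * fdiff h k) _ _ (fall_ratio_cv k)) as Hk.
      rewrite Rmult_1_l in Hk. exact Hk.
    + intros N k. rewrite Rmult_assoc, Rabs_mult. pose proof (fall_ratio_bounds N k).
      rewrite (Rabs_right (fall_ratio N k)) by lra.
      specialize (Hdb k). pose proof (Rabs_pos (b k * fdiff h k)). nra.
    + apply Rsum_geom_cv. lra.
    + intros N k Hk. rewrite fall_ratio_gt by auto. ring.
    + assert (LA = LB).
      { apply (UL_sequence (fun N => Rsum (S N) (fun s => p N s * h s))); auto.
        apply (Un_cv_ext _ (fun N => Rsum (S N) (fun k => fall_ratio N k * b k * fdiff h k))); auto.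
        intros N. apply p_moment. }
      assert (LB = l) by (apply (UL_sequence (fun n => Rsum n (fun k => b k * fdiff h k))); auto;
        apply Rsum_infinite_sum; exact Hl).
      subst. apply infinite_sum_Rsum. exact HA1.
Qed.

End LimitLaw.

Lemma count_prob_as_p N P Cp s : (1 <= N)%nat -> is_joint_law N P -> symmetric N P ->
  (forall j, (1 <= j)%nat -> (j <= N)%nat -> corr_coef N P j = Cp j) ->
  count_prob N P s = p (expcoef (dlog_coef Cp)) N s.
Proof.
  intros HN [_ Hsum] Hsym Hcorr. rewrite count_prob_symmetric by exact Hsym.
  unfold p. apply Rsum_ext. intros k Hk. f_equal.
  assert (HP0 : Pk N P 0 [] = 1) by (unfold Pk; rewrite Nat.sub_0_r; exact Hsum).
  pose proof (Pk_ones_expcoef N P Cp HN HP0 Hcorr k ltac:(lia)) as Hk'.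
  assert (0 < INR N ^ k) by (apply pow_lt, lt_0_INR; lia).
  unfold fall_ratio.
  replace (expcoef (dlog_coef Cp) k) with (INR N ^ k * Pk N P k (repeat true k) / INR (fact k))
    by (rewrite Hk'; pose proof (INR_fact_pos k); field; lra).
  pose proof (INR_fact_pos k). field. lra.
Qed.

Lemma neg1_pow_sub l t : (t <= l)%nat -> (-1) ^ (l - t) = (-1) ^ (l + t).
Proof.
  intros H. replace (l + t)%nat with ((l - t) + 2 * t)%nat by lia.
  rewrite pow_add, pow_mult. replace ((-1) ^ 2) with 1 by (simpl; ring). rewrite pow1. ring.
Qed.

(* By the binomial theorem, the exponent of the theorem is [F (e^(iu) - 1)] with
   [F x = sum_l C l x^l / l!]. *)
Lemma expo_series_fdiff lmax C Cp u : (forall j, (1 <= j <= lmax)%nat -> Cp j = C j) ->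
  expo_series_re (dlog_coef Cp) (fdiff_cos u) lmax 1 = expo_re lmax C u /\
  expo_series_im (dlog_coef Cp) (fdiff_sin u) lmax 1 = expo_im lmax C u.
Proof.
  intros HC. unfold expo_series_re, expo_series_im, expo_re, expo_im.
  rewrite !sumR_seq1. split; apply Rsum_ext; intros i Hi; unfold Rsum;
    rewrite pow1, Rmult_1_r; unfold fdiff_cos, fdiff_sin, fdiff;
    rewrite <- Rsum_scal; apply Rsum_ext; intros t Ht;
    rewrite dlog_coef_S, HC, neg1_pow_sub, binom_C, (Rmult_comm (INR t) u) by lia;
    replace (INR (fact (S i))) with (INR (S i) * INR (fact i)) by (rewrite <- mult_INR; reflexivity);
    pose proof (INR_fact_pos i); assert (0 < INR (S i)) by (apply lt_0_INR; lia);
    field; lra.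
Qed.

Theorem mainTheorem1 :
  forall (lmax : nat) (C : nat -> R) (N0 : nat) (P : nat -> list bool -> R),
    (1 <= lmax)%nat ->
    (forall N : nat, (N0 <= N)%nat ->
       is_joint_law N (P N) /\ symmetric N (P N) /\
       (forall k : nat, (1 <= k)%nat -> (k <= lmax)%nat -> (k <= N)%nat ->
          corr_coef N (P N) k = C k) /\
       (forall k : nat, (lmax < k)%nat -> (k <= N)%nat ->
          corr_coef N (P N) k = 0)) ->
    exists pinf : nat -> R,
      (forall s : nat, Un_cv (fun N => count_prob N (P N) s) (pinf s)) /\
      (forall u : R,
         infinite_sum (fun s => pinf s * cos (u * INR s))
                      (exp (expo_re lmax C u) * cos (expo_im lmax C u)) /\
         infinite_sum (fun s => pinf s * sin (u * INR s))
                      (exp (expo_re lmax C u) * sin (expo_im lmax C u))).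
Proof.
  intros lmax C N0 P _ Hyp.
  set (Cp := fun j => if Nat.leb j lmax then C j else 0).
  set (D := dlog_coef Cp).
  assert (HD : forall j, (lmax < j)%nat -> D j = 0).
  { intros j Hj. unfold D, dlog_coef, Cp. destruct (Nat.leb_spec j lmax); [lia |]. unfold Rdiv. ring. }
  destruct (expcoef_geometric_bound D lmax HD) as [K [_ HK]].
  exists (plim (expcoef D)). split.
  - intros s. apply (Un_cv_eventually _ (fun N => p (expcoef D) N s) _ (max N0 1));
      [| exact (p_cv _ K HK s)].
    intros N HN. destruct (Hyp N ltac:(lia)) as (Hlaw & Hsym & Hc1 & Hc2).
    apply count_prob_as_p; auto; [lia |].
    intros j Hj HjN. unfold Cp. destruct (Nat.leb_spec j lmax); auto.
  - intros u.
    destruct (expo_series_fdiff lmax C Cp u) as [Ere Eim].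
    { intros j Hj. unfold Cp. destruct (Nat.leb_spec j lmax); [reflexivity | lia]. }
    destruct (exp_series_sum D (fdiff_cos u) (fdiff_sin u) lmax K HD HK
      (fdiff_cos_0 u) (fdiff_sin_0 u) (fdiff_cis_add u) (fdiff_cis_bound u)) as [Hre Him].
    fold D in Ere, Eim. rewrite Ere, Eim in Hre, Him.
    pose proof (exp_coef_bound D (fdiff_cos u) (fdiff_sin u) K HK (fdiff_cis_bound u)) as Hb.
    split; apply (plim_moment _ K HK); auto;
      [ intros; apply Rabs_le, COS_bound | intros k; apply Hb
      | intros; apply Rabs_le, SIN_bound | intros k; apply Hb ].
Qed.
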